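(* Let $N$ and $\tilde{N}$ be real symmetric matrices and $\epsilon\ge0$. If $I-\tilde{N}\approx_{\epsilon}I-N$ and $N$ is positive semidefinite, then $I+\tilde{N}\approx_{\epsilon}I+N$.
   Context: For real symmetric $X,Y$ and $\epsilon\ge0$, $X\approx_\epsilon Y$ means $(1-\epsilon)v^TYv\le v^TXv\le(1+\epsilon)v^TYv$ for all vectors $v$. *)

From HB Require Import structures.
From mathcomp Require Import all_boot all_order all_algebra.
Set Implicit Arguments. Unset Strict Implicit. Unset Printing Implicit Defensive.
Import Order.TTheory GRing.Theory Num.Theory.
Local Open Scope ring_scope.

Definition qform (R : realFieldType) (n : nat) (X : 'M[R]_n) (v : 'cV[R]_n) : R :=
  (v^T *m X *m v) 0 0.

Definition is_symmetric (R : realFieldType) (n : nat) (X : 'M[R]_n) : Prop :=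
  X^T = X.

Definition is_psd (R : realFieldType) (n : nat) (X : 'M[R]_n) : Prop :=
  forall v : 'cV[R]_n, 0 <= qform X v.

Definition approx_eps (R : realFieldType) (n : nat) (eps : R) (X Y : 'M[R]_n) : Prop :=
  forall v : 'cV[R]_n,
    (1 - eps) * qform Y v <= qform X v /\ qform X v <= (1 + eps) * qform Y v.

(* For a real matrix A, a PSD matrix N and any Nt, the relation
   A - Nt ≈_eps A - N implies A + Nt ≈_eps A + N; the theorem is the case A = I.
   Everything is pointwise in the test vector v: writing a, b, c for the
   quadratic forms of A, N, Nt at v, the hypothesis bounds a - c between
   (1 -+ eps)(a - b), and since a + c = 2a - (a - c) we get
   (1 - eps) a + (1 + eps) b <= a + c <= (1 + eps) a + (1 - eps) b.
   Because eps * b >= 0 these bounds are within the required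
   (1 -+ eps)(a + b). *)
From HB Require Import structures.
From mathcomp Require Import all_boot all_order all_algebra.
From mathcomp Require Import lra.
Import Order.TTheory GRing.Theory Num.Theory.
Local Open Scope ring_scope.

Lemma sandwich_flip (R : realDomainType) (eps a b c : R) :
  0 <= eps -> 0 <= b ->
  (1 - eps) * (a - b) <= a - c <= (1 + eps) * (a - b) ->
  (1 - eps) * (a + b) <= a + c <= (1 + eps) * (a + b).
Proof.
move=> eps_ge0 b_ge0 /andP[lo hi].
have epsb_ge0 : 0 <= eps * b by apply: mulr_ge0.
by apply/andP; split; nra.
Qed.

Lemma qformD (R : realFieldType) (n : nat) (X Y : 'M[R]_n) (v : 'cV[R]_n) :
  qform (X + Y) v = qform X v + qform Y v.
Proof. by rewrite /qform mulmxDr mulmxDl mxE. Qed.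

Lemma qformB (R : realFieldType) (n : nat) (X Y : 'M[R]_n) (v : 'cV[R]_n) :
  qform (X - Y) v = qform X v - qform Y v.
Proof. by rewrite qformD /qform mulmxN mulNmx [X in _ + X]mxE. Qed.

Lemma approx_eps_flip (R : realFieldType) (n : nat) (A N Nt : 'M[R]_n) (eps : R) :
  0 <= eps -> is_psd N ->
  approx_eps eps (A - Nt) (A - N) -> approx_eps eps (A + Nt) (A + N).
Proof.
move=> eps_ge0 psdN approx_minus v.
have [lo hi] := approx_minus v; rewrite !qformB in lo hi.
have /andP[] : (1 - eps) * (qform A v + qform N v) <= qform A v + qform Nt v
                 <= (1 + eps) * (qform A v + qform N v).
  by apply: sandwich_flip; [| exact: psdN | apply/andP; split].
by rewrite !qformD.
Qed.

Theorem claim1 (R : realFieldType) (n : nat) (N Nt : 'M[R]_n) (eps : R) :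
  is_symmetric N -> is_symmetric Nt -> 0 <= eps ->
  approx_eps eps (1%:M - Nt) (1%:M - N) -> is_psd N ->
  approx_eps eps (1%:M + Nt) (1%:M + N).
Proof. by move=> _ _ eps_ge0 approx_minus psdN; apply: approx_eps_flip. Qed.
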